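(* Let $\alpha_0=(X_0,\beta_0,\tau_0)$ be a non-saturated pre-action of $\Gamma=\mathrm{BS}(m,n)$, let $x\in X_0$, and let $\alpha$ be a one orbit free $\mathtt r$-extension of $(\alpha_0,x)$ (for some transfer rule $\mathtt r$), with new $\beta$-orbit containing the chosen point $y$, of cardinality $L_y$. Let $\varepsilon=1$ if the extension is positive and $\varepsilon=-1$ if negative. Let $x_0\in X_0$ lie in the same connected component of $\mathrm{Sch}(\alpha_0)$ as $x$, and let $c$ be any path from $x_0$ to $x$ in $\mathrm{Sch}(\alpha_0)$. Then: (1) if $L_y<\infty$, $\mathrm{Stab}_\alpha(x_0)=\langle\mathrm{Stab}_{\alpha_0}(x_0),\ \Psi(c)\,t^{\varepsilon}b^{L_y}t^{-\varepsilon}\,\Psi(c)^{-1}\rangle$; (2) if $L_y=\infty$, or if the extension is maximal (i.e. $L_y=|m|L_x/\gcd(L_x,n)$ when positive and $L_y=|n|L_x/\gcd(L_x,m)$ when negative, where $L_x=|x\langle\beta_0\rangle|$), then $\mathrm{Stab}_\alpha(x_0)=\mathrm{Stab}_{\alpha_0}(x_0)$.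
   Context: $\mathrm{BS}(m,n)=\langle b,t\mid tb^mt^{-1}=b^n\rangle$, $|m|,|n|\ge2$; maps act on the right. A pre-action is $(X,\beta,\tau)$ with $\beta$ a bijection of $X$, $\tau$ a partial bijection with $\beta^n$-invariant domain, $\beta^m$-invariant range, and $x\tau\beta^m=x\beta^n\tau$ on $\mathrm{dom}(\tau)$; saturated means $\mathrm{dom}(\tau)=\mathrm{rng}(\tau)=X$. Its Schreier graph $\mathrm{Sch}(\alpha)$ has vertex set $X$, a $b$-labelled edge $x\to x\beta$ (with opposite $b^{-1}$-edge) for all $x$, and a $t$-labelled edge $x\to x\tau$ (with opposite $t^{-1}$-edge) for $x\in\mathrm{dom}(\tau)$. For a path $c$, $\Psi(c)\in\Gamma$ is the element represented by the word read along $c$ (so the endpoint of $c$ is the start point acted on by $\Psi(c)$). $\mathrm{Stab}_\alpha(x_0)$ is the image of $\pi_1(\mathrm{Sch}(\alpha),x_0)$ under $\Psi$. Transfer rule: a map $\mathtt r:(\mathbb{Z}_{\ge1}\cup\{\infty\})\times\{\pm\}\to\mathbb{Z}_{\ge1}\cup\{\infty\}$ with $L'=\mathtt r(L,\epsilon)$ satisfying $L/\gcd(L,n)=L'/\gcd(L',m)$ if $\epsilon=+$, $L/\gcd(L,m)=L'/\gcd(L',n)$ if $\epsilon=-$ ($\gcd(\infty,k)=|k|$; infinite on one side means infinite on both). One orbit free $\mathtt r$-extension of $(\alpha_0,x)$, $L=|x\langle\beta_0\rangle|$: positive (if $x\notin\mathrm{dom}(\tau_0)$): adjoin a new set $O'$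 of size $L'=\mathtt r(L,+)$ carrying a transitive permutation $\beta'$ (an $L'$-cycle, or a $\mathbb{Z}$-translation if infinite), pick $y\in O'$, extend $\beta_0$ by $\beta'$ and $\tau_0$ by $x\beta_0^{jn}\mapsto y\beta'^{jm}$ ($j\in\mathbb{Z}$); negative (if $x\notin\mathrm{rng}(\tau_0)$): same with $L'=\mathtt r(L,-)$ and $\tau_0$ extended by $y\beta'^{jn}\mapsto x\beta_0^{jm}$. *)

(* Baumslag-Solitar group BS(m,n) as words modulo the
   congruence generated by free cancellation and t b^m t^-1 = b^n. *)
From mathcomp Require Import all_boot all_order all_algebra.
Set Implicit Arguments. Unset Strict Implicit. Unset Printing Implicit Defensive.

Inductive letter := Lb | Lbi | Lt | Lti.
Definition word := seq letter.

Definition linv (a : letter) : letter :=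
  match a with Lb => Lbi | Lbi => Lb | Lt => Lti | Lti => Lt end.
Definition winv (w : word) : word := rev (map linv w).

Definition bword (k : int) : word :=
  match k with Posz p => nseq p Lb | Negz p => nseq p.+1 Lbi end.

Inductive bs_eq (m n : int) : word -> word -> Prop :=
| bs_refl w : bs_eq m n w w
| bs_sym u v : bs_eq m n u v -> bs_eq m n v u
| bs_trans u v w : bs_eq m n u v -> bs_eq m n v w -> bs_eq m n u w
| bs_cancel u v a : bs_eq m n (u ++ [:: a; linv a] ++ v) (u ++ v)
| bs_rel u v : bs_eq m n (u ++ (Lt :: bword m ++ [:: Lti]) ++ v) (u ++ bword n ++ v).

Definition is_subgroup (m n : int) (H : word -> Prop) : Prop :=
  [/\ H [::], (forall u v, H u -> H v -> H (u ++ v)),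
      (forall u, H u -> H (winv u)) & (forall u v, bs_eq m n u v -> H u -> H v)].

Definition gen_sub (m n : int) (S : word -> Prop) (h : word) (g : word) : Prop :=
  forall H, is_subgroup m n H -> (forall s, S s -> H s) -> H h -> H g.

(* integer powers of a bijection f with inverse g; maps act on the right *)
Definition bpow {X : Type} (f g : X -> X) (k : int) (x : X) : X :=
  match k with Posz p => iter p f x | Negz p => iter p.+1 g x end.

Section PreAction.
Variables (X : Type) (m n : int) (beta betai : X -> X) (tau : X -> X -> Prop).
(* tau is the graph of a partial map *)
Definition pdom (a : X) : Prop := exists b, tau a b.
Definition prng (b : X) : Prop := exists a, tau a b.

Definition is_preaction : Prop :=
  [/\ cancel beta betai, cancel betai beta,
      (forall a b c, tau a b -> tau a c -> b = c) &
      (forall a b c, tau a c -> tau b c -> a = b)] /\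
  [/\ (forall a, pdom a <-> pdom (bpow beta betai n a)),
      (forall a, prng a <-> prng (bpow beta betai m a)) &
      (forall a b, tau a b -> tau (bpow beta betai n a) (bpow beta betai m b))].

Definition saturated : Prop := forall a, pdom a /\ prng a.

Inductive walk : X -> word -> X -> Prop :=
| walk_nil x : walk x [::] x
| walk_b x w y : walk (beta x) w y -> walk x (Lb :: w) y
| walk_bi x w y : walk (betai x) w y -> walk x (Lbi :: w) y
| walk_t x x' w y : tau x x' -> walk x' w y -> walk x (Lt :: w) y
| walk_ti x x' w y : tau x' x -> walk x' w y -> walk x (Lti :: w) y.

(* Stab(x0) = Psi(pi_1(Sch, x0)), as a bs_eq-closed set of words *)
Definition Stab (x0 : X) (g : word) : Prop :=
  exists w, walk x0 w x0 /\ bs_eq m n w g.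
End PreAction.

(* cardinalities in Z_{>=1} \cup {oo} *)
Inductive ccard := Fin of nat | Inf.
Definition valid_card (c : ccard) : Prop :=
  match c with Fin k => (0 < k)%N | Inf => True end.

(* L / gcd(L,k), with gcd(oo,k) = |k| and oo/|k| = oo *)
Definition cdivg (L : ccard) (k : int) : ccard :=
  match L with Fin a => Fin (a %/ gcdn a `|k|) | Inf => Inf end.

(* transfer rule; the bool is the sign (true = +, false = -) *)
Definition transfer_rule (m n : int) (r : ccard -> bool -> ccard) : Prop :=
  forall L, valid_card L ->
    [/\ valid_card (r L true), cdivg L n = cdivg (r L true) m,
        valid_card (r L false) & cdivg L m = cdivg (r L false) n].

Definition orbit_card {X : Type} (f g : X -> X) (x : X) (c : ccard) : Prop :=
  match c with
  | Fin k => (0 < k)%N /\ iter k f x = x /\ (forall j, (0 < j < k)%N -> iter j f x <> x)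
  | Inf => forall k : int, k != 0%R -> bpow f g k x <> x
  end.

(* one orbit free extension: new points form the type O, X = X0 + O *)
Section Extension.
Variables (m n : int) (X0 O : Type) (beta0 betai0 : X0 -> X0)
  (tau0 : X0 -> X0 -> Prop) (beta' betai' : O -> O) (x : X0) (y : O) (eps : bool).

Definition ext_beta (u : X0 + O) : X0 + O :=
  match u with inl a => inl (beta0 a) | inr o => inr (beta' o) end.
Definition ext_betai (u : X0 + O) : X0 + O :=
  match u with inl a => inl (betai0 a) | inr o => inr (betai' o) end.

(* eps = true: positive extension  x beta0^{jn} |-> y beta'^{jm};
   eps = false: negative extension y beta'^{jn} |-> x beta0^{jm} *)
Definition ext_tau (u v : X0 + O) : Prop :=
  match u, v with
  | inl a, inl b => tau0 a b
  | inl a, inr c => eps /\ exists j : int,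
       a = bpow beta0 betai0 (j * n)%R x /\ c = bpow beta' betai' (j * m)%R y
  | inr c, inl a => eps = false /\ exists j : int,
       c = bpow beta' betai' (j * n)%R y /\ a = bpow beta0 betai0 (j * m)%R x
  | inr _, inr _ => False
  end.
End Extension.

(* A closed walk at x0 in the extended Schreier graph either stays in Sch(alpha0) or
   enters the new orbit through an edge between x and y.  Reading a walk letter by
   letter, the word read so far always lies in the right coset H.u of a normal-form
   path u to the current vertex: an old path, or an old path to x followed by the new
   edge t^eps and b^s.  Hence every closed walk reads an element of H, for any subgroup
   H containing Stab_alpha0(x0) and the conjugates u t^eps b^d t^-eps u^-1 with u a path
   from x0 to x and d a period of y.  If L_y is finite these conjugates are generated by
   Stab_alpha0(x0) and Psi(c) t^eps b^(L_y) t^-eps Psi(c)^-1.  If L_y is infinite, or the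
   extension is maximal, every period of y has the form J.p with J.q a period of x,
   where t^eps b^p t^-eps = b^q; then u t^eps b^(J.p) t^-eps u^-1 = u b^(J.q) u^-1 is
   already a loop of Sch(alpha0). *)

From mathcomp Require Import all_boot all_order all_algebra zify ring.

Set Implicit Arguments. Unset Strict Implicit. Unset Printing Implicit Defensive.
Import GRing.Theory Num.Theory.
Local Open Scope ring_scope.

Lemma int_ind_addsub (P : int -> Prop) : P 0 -> (forall k, P k -> P (k + 1)) ->
  (forall k, P k -> P (k - 1)) -> forall k, P k.
Proof.
move=> P0 PS PP; elim/int_ind => [//|k|k].
- by rewrite intS addrC; apply: PS.
- by rewrite intS opprD addrC; apply: PP.
Qed.

Section Words.
Variables m n : int.
Local Notation eqw := (bs_eq m n).

Lemma eqw_ctx u v a b : eqw u v -> eqw (a ++ u ++ b) (a ++ v ++ b).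
Proof.
elim=> {u v} [w|u v _|u v w _ IHuv _ IHvw|u v l|u v].
- exact: bs_refl.
- exact: bs_sym.
- exact: bs_trans IHvw.
- by have := bs_cancel m n (a ++ u) (v ++ b) l; rewrite -!catA.
- by have := bs_rel m n (a ++ u) (v ++ b); rewrite -!catA.
Qed.

Lemma eqw_cat a a' b b' : eqw a a' -> eqw b b' -> eqw (a ++ b) (a' ++ b').
Proof.
move=> Ea Eb; apply: (bs_trans (v := a' ++ b)); first exact: (eqw_ctx [::] b Ea).
by have := eqw_ctx a' [::] Eb; rewrite !cats0.
Qed.

Lemma eqw_catl a b b' : eqw b b' -> eqw (a ++ b) (a ++ b').
Proof. exact/eqw_cat/bs_refl. Qed.

Lemma eqw_catr a a' b : eqw a a' -> eqw (a ++ b) (a' ++ b).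
Proof. by move=> Ea; apply: eqw_cat Ea (bs_refl _ _ _). Qed.

Lemma linvK : involutive linv. Proof. by case. Qed.

Lemma winv_cat u v : winv (u ++ v) = winv v ++ winv u.
Proof. by rewrite /winv map_cat rev_cat. Qed.

Lemma winvK : involutive winv.
Proof. by move=> u; rewrite /winv map_rev revK -map_comp (eq_map linvK) map_id. Qed.

Lemma eqw_catV w : eqw (w ++ winv w) [::].
Proof.
elim: w => [|l w IH]; first exact: bs_refl.
rewrite -cat1s winv_cat -catA (catA w).
apply: bs_trans (bs_cancel m n [::] [::] l).
by have := eqw_ctx [:: l] [:: linv l] IH.
Qed.

Lemma eqw_Vcat w : eqw (winv w ++ w) [::].
Proof. by have := eqw_catV (winv w); rewrite winvK. Qed.

Lemma eqw_winv u v : eqw u v -> eqw (winv u) (winv v).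
Proof.
move=> Euv; apply: (bs_trans (v := winv u ++ (v ++ winv v))).
  by have := eqw_catl (winv u) (bs_sym (eqw_catV v)); rewrite cats0.
apply: (bs_trans (v := (winv u ++ u) ++ winv v)).
  by rewrite -catA; apply/eqw_catl/eqw_catr/bs_sym.
exact: eqw_catr (eqw_Vcat u).
Qed.

Definition wconj (v A : word) : word := v ++ A ++ winv v.

Lemma wconjM v w A : wconj (v ++ w) A = wconj v (wconj w A).
Proof. by rewrite /wconj winv_cat -!catA. Qed.

Lemma wconj_winv v A : winv (wconj v A) = wconj v (winv A).
Proof. by rewrite /wconj !winv_cat winvK catA. Qed.

Lemma eqw_wconj v A B : eqw A B -> eqw (wconj v A) (wconj v B).
Proof. exact: eqw_ctx. Qed.

Lemma eqw_wconjl v v' A : eqw v v' -> eqw (wconj v A) (wconj v' A).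
Proof. by move=> Ev; rewrite /wconj !catA; apply: eqw_cat (eqw_catr A Ev) (eqw_winv Ev). Qed.

Lemma wconj_nil v : eqw (wconj v [::]) [::].
Proof. exact: eqw_catV. Qed.

Lemma wconj_cat v A B : eqw (wconj v A ++ wconj v B) (wconj v (A ++ B)).
Proof.
rewrite /wconj -!catA; do 2 apply: eqw_catl.
by rewrite catA; apply: eqw_catr (eqw_Vcat v).
Qed.

Lemma eqw_cat_of_wconj v A B : eqw (wconj v A) B -> eqw (v ++ A) (B ++ v).
Proof.
move=> E; apply: bs_trans (eqw_catr v E).
rewrite /wconj -!catA; apply: eqw_catl; apply: bs_sym.
by have := eqw_ctx A [::] (eqw_Vcat v); rewrite !cats0.
Qed.

End Words.

Section Bword.
Variables m n : int.
Local Notation eqw := (bs_eq m n).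

Lemma nseqSr k (l : letter) : nseq k.+1 l = nseq k l ++ [:: l].
Proof. by elim: k => //= k <-. Qed.

Lemma eqw_cancel_last u l : eqw (u ++ [:: l; linv l]) u.
Proof. by have := bs_cancel m n u [::] l; rewrite !cats0. Qed.

Lemma bwordS k : eqw (bword (k + 1)) (bword k ++ [:: Lb]).
Proof.
case: k => [p|[|p]].
- have -> : Posz p + 1 = Posz p.+1 by lia.
  by rewrite /= -nseqSr; apply: bs_refl.
- exact: bs_sym (bs_cancel m n [::] [::] Lbi).
- have -> : Negz p.+1 + 1 = Negz p by lia.
  change (eqw (nseq p.+1 Lbi) (nseq p.+2 Lbi ++ [:: Lb])).
  by rewrite [nseq p.+2 _]nseqSr -catA; apply/bs_sym/eqw_cancel_last.
Qed.

Lemma bwordP k : eqw (bword (k - 1)) (bword k ++ [:: Lbi]).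
Proof.
case: k => [[|p]|p].
- exact: bs_refl.
- have -> : Posz p.+1 - 1 = Posz p by lia.
  change (eqw (nseq p Lb) (nseq p.+1 Lb ++ [:: Lbi])).
  by rewrite [nseq p.+1 _]nseqSr -catA; apply/bs_sym/eqw_cancel_last.
- have -> : Negz p - 1 = Negz p.+1 by lia.
  by rewrite /= -nseqSr; apply: bs_refl.
Qed.

Lemma bwordD a b : eqw (bword (a + b)) (bword a ++ bword b).
Proof.
elim/int_ind_addsub: b => [|k IH|k IH]; first by rewrite addr0 cats0; apply: bs_refl.
- rewrite addrA; apply: bs_trans (bwordS _) _; apply: bs_trans (eqw_catr _ IH) _.
  by rewrite -catA; apply/eqw_catl/bs_sym/bwordS.
- rewrite addrA; apply: bs_trans (bwordP _) _; apply: bs_trans (eqw_catr _ IH) _.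
  by rewrite -catA; apply/eqw_catl/bs_sym/bwordP.
Qed.

Lemma winv_bword k : winv (bword k) = bword (- k).
Proof.
have winv_nseq j l : winv (nseq j l) = nseq j (linv l) by rewrite /winv map_nseq rev_nseq.
case: k => [[|p]|p]; first by [].
- have -> : - Posz p.+1 = Negz p by lia.
  by rewrite winv_nseq.
- have -> : - Negz p = Posz p.+1 by lia.
  by rewrite winv_nseq.
Qed.

Lemma wconj_bwordD v a b :
  eqw (wconj v (bword (a + b))) (wconj v (bword a) ++ wconj v (bword b)).
Proof. exact/bs_sym/(bs_trans (wconj_cat _ _ _ _ _))/eqw_wconj/bs_sym/bwordD. Qed.

Lemma wconj_bwordN v a : wconj v (bword (- a)) = winv (wconj v (bword a)).
Proof. by rewrite wconj_winv winv_bword. Qed.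

Lemma wconj_bword_mul v p q : eqw (wconj v (bword p)) (bword q) ->
  forall J, eqw (wconj v (bword (J * p))) (bword (J * q)).
Proof.
move=> Epq; elim/int_ind_addsub => [|J IH|J IH].
- by rewrite !mul0r; apply: wconj_nil.
- rewrite !mulrDl !mul1r; apply: bs_trans (wconj_bwordD _ _ _) _.
  exact/(bs_trans (eqw_cat IH Epq))/bs_sym/bwordD.
- rewrite !mulrBl !mul1r; apply: bs_trans (wconj_bwordD _ _ _) _.
  rewrite wconj_bwordN; apply: bs_trans (eqw_cat IH (eqw_winv Epq)) _.
  by rewrite winv_bword; apply/bs_sym/bwordD.
Qed.

End Bword.

Lemma bs_rel_wconj m n (eps : bool) :
  bs_eq m n (wconj [:: if eps then Lt else Lti] (bword (if eps then m else n)))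
            (bword (if eps then n else m)).
Proof.
have rel : bs_eq m n (wconj [:: Lt] (bword m)) (bword n).
  by have := bs_rel m n [::] [::]; rewrite !cats0.
case: eps => //; apply: bs_trans (eqw_wconj _ (bs_sym rel)) _.
rewrite -wconjM; apply: bs_trans (eqw_wconjl _ (bs_cancel m n [::] [::] Lti)) _.
by rewrite /wconj /= cats0; apply: bs_refl.
Qed.

Section Subgroup.
Variables (m n : int) (H : word -> Prop).
Hypothesis HH : is_subgroup m n H.
Local Notation eqw := (bs_eq m n).

Lemma subgroup_nil : H [::]. Proof. by case: HH. Qed.

Lemma subgroup_cat u v : H u -> H v -> H (u ++ v).
Proof. by case: HH => _ Hcat _ _; apply: Hcat. Qed.

Lemma subgroup_winv u : H u -> H (winv u).
Proof. by case: HH => _ _ Hinv _; apply: Hinv. Qed.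

Lemma subgroup_eqw u v : eqw u v -> H u -> H v.
Proof. by case: HH => _ _ _ Heq; apply: Heq. Qed.

Lemma subgroup_wconj v A : H v -> H A -> H (wconj v A).
Proof. by move=> Hv HA; apply/subgroup_cat/subgroup_cat/subgroup_winv. Qed.

Lemma subgroup_wconj_rebase u c v A :
  H (wconj (c ++ v) A) -> H (u ++ winv c) -> H (wconj (u ++ v) A).
Proof.
move=> Hc Huc; apply: (subgroup_eqw _ (subgroup_wconj Huc Hc)).
rewrite -wconjM; apply: eqw_wconjl; rewrite -catA; apply: eqw_catl.
by rewrite catA; apply: eqw_catr (eqw_Vcat m n c).
Qed.

Lemma subgroup_wconj_bword_mul Q v k :
  H (wconj v (bword k)) -> H (wconj v (bword (Q * k))).
Proof.
move=> Hk; elim/int_ind_addsub: Q => [|Q IH|Q IH].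
- by rewrite mul0r; apply: subgroup_eqw (bs_sym (wconj_nil _ _ v)) subgroup_nil.
- rewrite mulrDl mul1r; apply: subgroup_eqw (bs_sym (wconj_bwordD _ _ _ _ _)) _.
  exact: subgroup_cat.
- rewrite mulrBl mul1r; apply: subgroup_eqw (bs_sym (wconj_bwordD _ _ _ _ _)) _.
  by rewrite wconj_bwordN; apply/subgroup_cat/subgroup_winv.
Qed.

Definition same_rcoset (g h : word) : Prop := H (g ++ winv h).

Lemma same_rcoset_trans g h k : same_rcoset g h -> same_rcoset h k -> same_rcoset g k.
Proof.
move=> Hgh Hhk; apply: subgroup_eqw (subgroup_cat Hgh Hhk).
by rewrite -catA; apply: eqw_catl; rewrite catA; apply: eqw_catr (eqw_Vcat _ _ h).
Qed.

Lemma same_rcoset_catr g h l : same_rcoset g h -> same_rcoset (g ++ l) (h ++ l).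
Proof.
rewrite /same_rcoset winv_cat -catA (catA l); apply: subgroup_eqw.
exact/eqw_catl/bs_sym/(eqw_catr _ (eqw_catV m n l)).
Qed.

Lemma same_rcoset_eqw g h h' : eqw h h' -> same_rcoset g h -> same_rcoset g h'.
Proof. by move=> E; apply/subgroup_eqw/eqw_catl/eqw_winv. Qed.

Lemma same_rcoset_wconj v A B : H (wconj v (A ++ winv B)) -> same_rcoset (v ++ A) (v ++ B).
Proof. by rewrite /same_rcoset /wconj winv_cat -!catA. Qed.

Lemma same_rcoset_mem g h : same_rcoset g h -> H h -> H g.
Proof.
move=> Hgh Hh; apply: subgroup_eqw (subgroup_cat Hgh Hh).
by have := eqw_catl g (eqw_Vcat m n h); rewrite catA cats0.
Qed.

End Subgroup.

Section Bpow.
Variables (X : Type) (f g : X -> X).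
Hypotheses (fK : cancel f g) (gK : cancel g f).
Local Notation bpow := (bpow f g).

Lemma bpowS k z : bpow (k + 1) z = f (bpow k z).
Proof.
case: k => [p|[|p]].
- by have -> : Posz p + 1 = Posz p.+1 by lia.
- by rewrite /= gK.
- have -> : Negz p.+1 + 1 = Negz p by lia.
  by rewrite /= gK.
Qed.

Lemma bpowP k z : bpow (k - 1) z = g (bpow k z).
Proof.
case: k => [[|p]|p]; first by [].
- have -> : Posz p.+1 - 1 = Posz p by lia.
  by rewrite /= fK.
- by have -> : Negz p - 1 = Negz p.+1 by lia.
Qed.

Lemma bpowD a b z : bpow (a + b) z = bpow b (bpow a z).
Proof.
elim/int_ind_addsub: b => [|k IH|k IH]; first by rewrite addr0.
- by rewrite addrA !bpowS IH.
- by rewrite addrA !bpowP IH.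
Qed.

Lemma bpowNK k z : bpow (- k) (bpow k z) = z.
Proof. by rewrite -bpowD subrr. Qed.

Lemma bpow_mul_period k z : iter k f z = z -> forall Q : int, bpow (Q * k%:Z) z = z.
Proof.
move=> Hk; elim/int_ind_addsub => [|Q IH|Q IH]; first by rewrite mul0r.
- by rewrite mulrDl mul1r bpowD IH.
- by rewrite mulrBl mul1r bpowD IH -{1}Hk -[iter k f z]/(bpow k%:Z z) bpowNK.
Qed.

Lemma orbit_card_Fin_dvd k z d : orbit_card f g z (Fin k) -> bpow d z = z -> (k%:Z %| d)%Z.
Proof.
case=> k_gt0 [Hk Hmin] Hd; have kn0 : k%:Z != 0 by lia.
move: Hd; rewrite {1}(divz_eq d k%:Z) bpowD bpow_mul_period //.
have r_ge0 := modz_ge0 d kn0; have r_lt := ltz_mod d kn0.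
move=> Hr; apply/dvdz_mod0P; move: r_ge0 r_lt Hr.
case: (d %% k%:Z)%Z => [[|r]|//] _ r_lt Hr //.
by case: (Hmin r.+1 _ Hr); lia.
Qed.

End Bpow.

Section Walks.
Variables (X : Type) (beta betai : X -> X) (tau : X -> X -> Prop).
Hypotheses (betaK : cancel beta betai) (betaiK : cancel betai beta).
Local Notation walk := (walk beta betai tau).

Definition sch_edge (l : letter) (P P' : X) : Prop :=
  match l with
  | Lb => P' = beta P
  | Lbi => P' = betai P
  | Lt => tau P P'
  | Lti => tau P' P
  end.

Lemma walk_consP P l w Q : walk P (l :: w) Q <-> exists2 P', sch_edge l P P' & walk P' w Q.
Proof.
split=> [W | [P' E W]]; first by inversion W; subst; eexists; eauto.
case: l E => /= E; [apply: walk_b | apply: walk_bi | apply: walk_t E _ | apply: walk_ti E _];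
  by rewrite -?E.
Qed.

Lemma walk_edge P l P' : sch_edge l P P' -> walk P [:: l] P'.
Proof. by move=> E; apply/walk_consP; exists P'; last apply: walk_nil. Qed.

Lemma walk_cat P u Q v R : walk P u Q -> walk Q v R -> walk P (u ++ v) R.
Proof.
elim=> {P u Q} [P|P w Q _ IH|P w Q _ IH|P P' w Q E _ IH|P P' w Q E _ IH] W //=.
- exact/walk_b/IH.
- exact/walk_bi/IH.
- exact: walk_t E (IH W).
- exact: walk_ti E (IH W).
Qed.

Lemma walk_rev P u Q : walk P u Q -> walk Q (winv u) P.
Proof.
elim=> {P u Q} [P|P w Q _ IH|P w Q _ IH|P P' w Q E _ IH|P P' w Q E _ IH];
  first exact: walk_nil.
all: rewrite -cat1s winv_cat; apply: walk_cat IH (walk_edge _) => /=.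
- by rewrite betaK.
- by rewrite betaiK.
- exact: E.
- exact: E.
Qed.

Lemma walk_bword k P : walk P (bword k) (bpow beta betai k P).
Proof.
suff walk_nseq l f j Q : (forall R, sch_edge l R (f R)) -> walk Q (nseq j l) (iter j f Q).
  by case: k => j; apply: walk_nseq.
move=> Ef; elim: j Q => [|j IH] Q; first exact: walk_nil.
by apply/walk_consP; exists (f Q); rewrite // iterSr; apply: IH.
Qed.

Variables m n : int.

Lemma Stab_subgroup x0 : is_subgroup m n (Stab m n beta betai tau x0).
Proof.
split.
- by exists [::]; split; [apply: walk_nil | apply: bs_refl].
- move=> u v [w [Hw Eu]] [w' [Hw' Ev]]; exists (w ++ w').
  by split; [apply: walk_cat Hw Hw' | apply: eqw_cat].
- move=> u [w [Hw Eu]]; exists (winv w).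
  by split; [apply: walk_rev | apply: eqw_winv].
- by move=> u v Euv [w [Hw Ew]]; exists w; split; last apply: bs_trans Euv.
Qed.

Lemma Stab_wconj_bword x0 u z d :
  walk x0 u z -> bpow beta betai d z = z -> Stab m n beta betai tau x0 (wconj u (bword d)).
Proof.
move=> Hu Hd; exists (wconj u (bword d)); split; last exact: bs_refl.
apply: walk_cat Hu (walk_cat _ (walk_rev Hu)).
by rewrite -{2}Hd; apply: walk_bword.
Qed.

End Walks.

Section Extension.
Variables (m n : int) (X0 O : Type) (beta0 betai0 : X0 -> X0) (tau0 : X0 -> X0 -> Prop)
  (beta' betai' : O -> O) (x : X0) (y : O) (eps : bool).
Local Notation eqw := (bs_eq m n).
Local Notation walk0 := (walk beta0 betai0 tau0).
Local Notation ebeta := (ext_beta beta0 beta').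
Local Notation ebetai := (ext_betai betai0 betai').
Local Notation etau := (ext_tau m n beta0 betai0 tau0 beta' betai' x y eps).
Local Notation walk := (walk ebeta ebetai etau).
Local Notation e := (if eps then Lt else Lti).
Local Notation p := (if eps then m else n).
Local Notation q := (if eps then n else m).
Local Notation Stab0 := (Stab m n beta0 betai0 tau0).
Local Notation Stab := (Stab m n ebeta ebetai etau).
Hypotheses (beta0K : cancel beta0 betai0) (betai0K : cancel betai0 beta0)
  (beta'K : cancel beta' betai') (betai'K : cancel betai' beta').

Lemma ext_betaK : cancel ebeta ebetai.
Proof. by case=> [a|o] /=; rewrite ?beta0K ?beta'K. Qed.

Lemma ext_betaiK : cancel ebetai ebeta.
Proof. by case=> [a|o] /=; rewrite ?betai0K ?betai'K. Qed.

Lemma walk_ext_inl a w b : walk0 a w b -> walk (inl a) w (inl b).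
Proof.
elim=> {a w b} [a|a w b _ IH|a w b _ IH|a a' w b E _ IH|a a' w b E _ IH].
- exact: walk_nil.
- exact: walk_b.
- exact: walk_bi.
- exact: (walk_t (x' := inl a')).
- exact: (walk_ti (x' := inl a')).
Qed.

Lemma bpow_ext_inr k o : bpow ebeta ebetai (Posz k) (inr o) = inr (iter k beta' o).
Proof. by elim: k => //= k ->. Qed.

Lemma sch_edge_ext_xy : sch_edge ebeta ebetai etau e (inl x) (inr y).
Proof. by case: eps => /=; split=> //; exists 0; rewrite !mul0r. Qed.

Lemma e_bword_commute J : eqw ([:: e] ++ bword (J * p)) (bword (J * q) ++ [:: e]).
Proof. exact/eqw_cat_of_wconj/wconj_bword_mul/bs_rel_wconj. Qed.

Definition new_edge (a : X0) (o : O) : Prop :=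
  exists J : int, a = bpow beta0 betai0 (J * q) x /\ o = bpow beta' betai' (J * p) y.

Variant ext_edge_spec : letter -> X0 + O -> X0 + O -> Prop :=
| ExtEdgeOld l a a' of sch_edge beta0 betai0 tau0 l a a' : ext_edge_spec l (inl a) (inl a')
| ExtEdgeB o : ext_edge_spec Lb (inr o) (inr (beta' o))
| ExtEdgeBi o : ext_edge_spec Lbi (inr o) (inr (betai' o))
| ExtEdgeNew a o of new_edge a o : ext_edge_spec e (inl a) (inr o)
| ExtEdgeNewV a o of new_edge a o : ext_edge_spec (linv e) (inr o) (inl a).

Lemma ext_edgeP l P P' : sch_edge ebeta ebetai etau l P P' -> ext_edge_spec l P P'.
Proof.
case: l P P' => [] [a|o] [a'|o'] //=; try by [case=> ->; constructor | constructor].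
- move=> [eps_t [J [-> ->]]]; have -> : Lt = e by rewrite eps_t.
  by apply: ExtEdgeNew; exists J; rewrite eps_t.
- move=> [eps_f [J [-> ->]]]; have -> : Lt = linv e by rewrite eps_f.
  by apply: ExtEdgeNewV; exists J; rewrite eps_f.
- move=> [eps_f [J [-> ->]]]; have -> : Lti = e by rewrite eps_f.
  by apply: ExtEdgeNew; exists J; rewrite eps_f.
- move=> [eps_t [J [-> ->]]]; have -> : Lti = linv e by rewrite eps_t.
  by apply: ExtEdgeNewV; exists J; rewrite eps_t.
Qed.

Lemma Stab_ext_inl x0 g : Stab0 x0 g -> Stab (inl x0) g.
Proof. by case=> w [Hw Ew]; exists w; split=> //; apply: walk_ext_inl. Qed.

Section CosetInvariant.
Variables (x0 : X0) (H : word -> Prop).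
Hypotheses (HH : is_subgroup m n H) (Stab0_sub : forall g, Stab0 x0 g -> H g).
Hypothesis new_loops_sub : forall u d, walk0 x0 u x -> bpow beta' betai' d y = y ->
  H (wconj (u ++ [:: e]) (bword d)).

Definition path_coset (P : X0 + O) (g : word) : Prop :=
  match P with
  | inl a => exists2 u, walk0 x0 u a & same_rcoset H g u
  | inr o => exists u s, [/\ walk0 x0 u x, o = bpow beta' betai' s y &
                            same_rcoset H g (u ++ [:: e] ++ bword s)]
  end.

Lemma path_coset_new a o g :
  new_edge a o -> path_coset (inl a) g -> path_coset (inr o) (g ++ [:: e]).
Proof.
move=> [J [Ea ->]] [u Hu Hg]; exists (u ++ bword (- (J * q))), (J * p); split=> //.
  by apply: walk_cat Hu _; rewrite -[x](bpowNK beta0K betai0K (J * q)) -Ea; apply: walk_bword.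
apply: (same_rcoset_eqw HH) (same_rcoset_catr HH _ Hg); rewrite -!catA; apply/eqw_catl/bs_sym.
apply: bs_trans (eqw_catl _ (e_bword_commute J)) _; rewrite catA.
by have := eqw_Vcat m n (bword (J * q)); rewrite winv_bword => /(eqw_catr [:: e]).
Qed.

Lemma path_coset_newV a o g : new_edge a o -> path_coset (inr o) g ->
  path_coset (inl a) (g ++ [:: linv e]).
Proof.
move=> [J [Ea Eo]] [u [s [Hu Es Hg]]]; exists (u ++ bword (J * q)).
  by apply: walk_cat Hu _; rewrite Ea; apply: walk_bword.
have period : bpow beta' betai' (s - J * p) y = y.
  by rewrite bpowD // -Es Eo bpowNK.
have Hsp : same_rcoset H ((u ++ [:: e]) ++ bword s) ((u ++ [:: e]) ++ bword (J * p)).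
  apply: same_rcoset_wconj; apply: (subgroup_eqw HH) (new_loops_sub Hu period).
  by rewrite winv_bword; apply/eqw_wconj/bwordD.
rewrite -!catA in Hsp; apply: (same_rcoset_eqw HH) (same_rcoset_trans HH
  (same_rcoset_catr HH _ Hg) (same_rcoset_catr HH _ Hsp)).
by rewrite -!catA; apply/eqw_catl; exact: (wconj_bword_mul (bs_rel_wconj m n eps) J).
Qed.

Lemma path_coset_edge l P P' g : sch_edge ebeta ebetai etau l P P' -> path_coset P g ->
  path_coset P' (g ++ [:: l]).
Proof.
case/ext_edgeP => [l' a a' E|o|o|a o|a o];
  [ | | | exact: path_coset_new | exact: path_coset_newV].
- case=> u Hu Hg; exists (u ++ [:: l']); first exact: walk_cat Hu (walk_edge E).
  exact (same_rcoset_catr HH [:: l'] Hg).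
- case=> u [s [Hu -> Hg]]; exists u, (s + 1); split; rewrite ?bpowS //.
  apply: (same_rcoset_eqw HH) (same_rcoset_catr HH _ Hg).
  by rewrite -!catA; apply/eqw_catl/eqw_catl/bs_sym/bwordS.
- case=> u [s [Hu -> Hg]]; exists u, (s - 1); split; rewrite ?bpowP //.
  apply: (same_rcoset_eqw HH) (same_rcoset_catr HH _ Hg).
  by rewrite -!catA; apply/eqw_catl/eqw_catl/bs_sym/bwordP.
Qed.

Lemma path_coset_walk P w Q g : walk P w Q -> path_coset P g -> path_coset Q (g ++ w).
Proof.
elim: w P g => [|l w IH] P g W Hg; first by inversion W; subst; rewrite cats0.
by case/walk_consP: W => P' E W; rewrite -cat1s catA; apply: IH W (path_coset_edge E Hg).
Qed.

Lemma ext_Stab_sub g : Stab (inl x0) g -> H g.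
Proof.
case=> w [Hw Ewg]; apply: (subgroup_eqw HH Ewg).
have [u Hu Hwu] : path_coset (inl x0) ([::] ++ w).
  apply: (path_coset_walk Hw); exists [::]; first exact: walk_nil.
  exact (subgroup_nil HH).
by apply: (same_rcoset_mem HH Hwu); apply: Stab0_sub; exists u; split; last apply: bs_refl.
Qed.

End CosetInvariant.

Lemma ext_Stab_eq x0 :
  (forall d, bpow beta' betai' d y = y ->
     exists2 J, d = J * p & bpow beta0 betai0 (J * q) x = x) ->
  forall g, Stab (inl x0) g <-> Stab0 x0 g.
Proof.
move=> periods_lift g; split; last exact: Stab_ext_inl.
apply: (ext_Stab_sub (Stab_subgroup tau0 beta0K betai0K m n x0) (fun _ h => h)).
move=> u d Hu /periods_lift[J -> HJ]; rewrite wconjM.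
apply: (subgroup_eqw (Stab_subgroup tau0 beta0K betai0K m n x0)
  (bs_sym (eqw_wconj u (wconj_bword_mul (bs_rel_wconj m n eps) J)))).
exact: (Stab_wconj_bword beta0K betai0K m n Hu).
Qed.

Lemma ext_Stab_gen x0 c k : walk0 x0 c x -> orbit_card beta' betai' y (Fin k) ->
  forall g, Stab (inl x0) g <-> gen_sub m n (Stab0 x0) (wconj (c ++ [:: e]) (bword k)) g.
Proof.
move=> Hc HLy g; split=> [Hg H HH Stab0_H Hgen | Hg].
  apply: (ext_Stab_sub HH Stab0_H _ Hg).
  move=> u d Hu /(orbit_card_Fin_dvd beta'K betai'K HLy)/dvdzP[Q ->].
  apply: (subgroup_wconj_bword_mul HH Q); apply: (subgroup_wconj_rebase HH Hgen).
  apply: Stab0_H; exists (u ++ winv c); split; last exact: bs_refl.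
  exact: walk_cat Hu (walk_rev beta0K betai0K Hc).
apply: Hg; [exact: Stab_subgroup ext_betaK ext_betaiK m n _ | exact: Stab_ext_inl |].
apply: (Stab_wconj_bword ext_betaK ext_betaiK m n
  (walk_cat (walk_ext_inl Hc) (walk_edge sch_edge_ext_xy))).
by case: HLy => _ [HLy _]; rewrite bpow_ext_inr HLy.
Qed.

End Extension.

Lemma transfer_max_dvd (p q : int) (a : nat) (d : int) : (0 < a)%N ->
  (((`|p| * a) %/ gcdn a `|q|)%N%:Z %| d)%Z -> exists2 J : int, d = J * p & (a%:Z %| J * q)%Z.
Proof.
move=> a_gt0 /dvdzP[Q ->]; set g := gcdn a `|q|.
have Ea : a = (a %/ g * g)%N by rewrite divnK // dvdn_gcdl.
have Eq : `|q|%N = (`|q| %/ g * g)%N by rewrite divnK // dvdn_gcdr.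
have -> : ((`|p| * a) %/ g)%N = (`|p| * (a %/ g))%N by rewrite muln_divA // dvdn_gcdl.
have [s [ss1 sp]] : exists s : int, s * s = 1 /\ s * p = `|p|%N%:Z.
  by case: (lerP 0 p) => hp; [exists 1; rewrite gez0_abs // | exists (-1); rewrite ltz0_abs //];
     split; ring.
have [t [tt1 tq]] : exists t : int, t * t = 1 /\ q = t * `|q|%N%:Z.
  by case: (lerP 0 q) => hq; [exists 1; rewrite gez0_abs // | exists (-1); rewrite ltz0_abs //];
     split; ring.
exists (Q * (a %/ g)%N%:Z * s); first by rewrite PoszM -sp; ring.
apply/dvdzP; exists (Q * s * t * (`|q| %/ g)%N%:Z).
by rewrite {1}tq {1}Eq {2}Ea !PoszM; ring.
Qed.

Local Close Scope ring_scope.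
Unset Implicit Arguments. Set Strict Implicit. Set Printing Implicit Defensive.

Theorem mainTheorem11
  (m n : int) (hm : (2 <= `|m|)%N) (hn : (2 <= `|n|)%N)
  (X0 : Type) (beta0 betai0 : X0 -> X0) (tau0 : X0 -> X0 -> Prop)
  (Halpha0 : is_preaction m n beta0 betai0 tau0)
  (Hnsat : ~ saturated tau0)
  (r : ccard -> bool -> ccard) (Hr : transfer_rule m n r)
  (x : X0) (Lx : ccard) (HLx : orbit_card beta0 betai0 x Lx)
  (eps : bool)
  (Hfree : if eps then ~ pdom tau0 x else ~ prng tau0 x)
  (O : Type) (beta' betai' : O -> O) (y : O) (Ly : ccard)
  (Hb'1 : cancel beta' betai') (Hb'2 : cancel betai' beta')
  (Htrans : forall o : O, exists k : int, o = bpow beta' betai' k y)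
  (HLy : orbit_card beta' betai' y Ly)
  (HLyr : Ly = r Lx eps)
  (x0 : X0) (c : word) (Hc : walk beta0 betai0 tau0 x0 c x) :
  let beta := ext_beta beta0 beta' in
  let betai := ext_betai betai0 betai' in
  let tau := ext_tau m n beta0 betai0 tau0 beta' betai' x y eps in
  (forall k : nat, Ly = Fin k ->
     forall g : word,
       Stab m n beta betai tau (inl x0) g <->
       gen_sub m n (Stab m n beta0 betai0 tau0 x0)
         (c ++ [:: if eps then Lt else Lti] ++ nseq k Lb ++
          [:: if eps then Lti else Lt] ++ winv c) g)
  /\
  ((Ly = Inf \/
    (exists a : nat, Lx = Fin a /\
       Ly = Fin (if eps then (`|m| * a) %/ gcdn a `|n| else (`|n| * a) %/ gcdn a `|m|))) ->
   forall g : word,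
     Stab m n beta betai tau (inl x0) g <-> Stab m n beta0 betai0 tau0 x0 g).
Proof.
move=> beta betai tau; rewrite {}/beta {}/betai {}/tau.
case: Halpha0 => [[beta0K betai0K _ _] _].
split=> [k Ly_k g | Ly_cases].
  have -> : c ++ [:: if eps then Lt else Lti] ++ nseq k Lb ++ [:: if eps then Lti else Lt]
      ++ winv c = wconj (c ++ [:: if eps then Lt else Lti]) (bword k).
    by rewrite /wconj winv_cat -!catA; case: (eps).
  by apply: ext_Stab_gen => //; rewrite -Ly_k.
apply: ext_Stab_eq => // d Hd.
case: Ly_cases => [Ly_inf | [a [Lx_a Ly_max]]].
  rewrite Ly_inf /= in HLy; have -> : d = 0%R by apply/eqP; apply/contraT => /HLy.
  by exists 0%R; rewrite ?mul0r.
rewrite Lx_a in HLx; case: HLx => a_gt0 [HLx _].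
have [J -> a_dvd] : exists2 J : int,
    d = (J * if eps then m else n)%R & (a%:Z %| (J * if eps then n else m)%R)%Z.
  apply: transfer_max_dvd a_gt0 _.
  by move: HLy; rewrite Ly_max; case: (eps) => /(orbit_card_Fin_dvd Hb'1 Hb'2); apply.
by exists J; rewrite // -(divzK a_dvd) bpow_mul_period.
Qed.
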